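(* Let $A$ be a physical system of dimension $m$ whose Hamiltonian has a non-degenerate Bohr spectrum, with energy eigenbasis $\{|x\rangle\}$, and let $\gamma^A$ be its Gibbs state, with diagonal vector $\mathbf{g}$. Let $\rho=\sum_{x,y}r_{xy}|x\rangle\langle y|$ and $\sigma=\sum_{x,y}s_{xy}|x\rangle\langle y|$ be states on $A$ with $r_{xy}\neq0$ for all $x\neq y$, and let $\mathbf{r}=(r_{xx})_x$, $\mathbf{s}=(s_{xx})_x$. Then there exists $\mathcal{E}\in\mathrm{GPC}(A\to A)$ with $\mathcal{E}(\rho)=\sigma$ if and only if there exists an $m\times m$ column stochastic matrix $P=(p_{y|x})$ (entry in row $y$, column $x$) such that $P\mathbf{r}=\mathbf{s}$, $P\mathbf{g}=\mathbf{g}$, and $$\sum_{x=1}^m p_{x|x}|x\rangle\langle x|+\sum_{x\neq y\in[m]}\frac{s_{xy}}{r_{xy}}|x\rangle\langle y|\geq0.$$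
   Context: The Hamiltonian $H^A=\sum_x a_x|x\rangle\langle x|$ has a non-degenerate Bohr spectrum if for all $x,y,x',y'$: $a_x-a_y=a_{x'}-a_{y'}$ holds iff ($x=x'$ and $y=y'$) or ($x=y$ and $x'=y'$). For fixed inverse temperature $\beta>0$ the Gibbs state is $\gamma^A=e^{-\beta H^A}/\mathrm{Tr}[e^{-\beta H^A}]$. $\mathrm{GPC}(A\to A)$ is the set of quantum channels $\mathcal{E}:A\to A$ with $\mathcal{E}(\gamma^A)=\gamma^A$ and $\mathcal{E}(e^{-iH^At}\rho e^{iH^At})=e^{-iH^At}\mathcal{E}(\rho)e^{iH^At}$ for all $t\in\mathbb{R}$ and states $\rho$. *)

From HB Require Import structures.
From mathcomp Require Import all_boot all_order all_algebra.
From mathcomp Require Import all_classical all_reals.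
From mathcomp Require Import sequences exp trigo.
From mathcomp Require Import complex.
Set Implicit Arguments. Unset Strict Implicit. Unset Printing Implicit Defensive.
Import Order.TTheory GRing.Theory Num.Theory.
Local Open Scope ring_scope.
Local Open Scope complex_scope.

Section QDefs.
Variable R : realType.
Local Notation C := R[i].

Definition adjmx m n (A : 'M[C]_(m, n)) : 'M[C]_(n, m) := (map_mx conjc A)^T.

(* positive semidefinite: Hermitian and <v, A v> >= 0 for all v
   (in the order of C, 0 <= z means z is real and nonnegative) *)
Definition psd m (A : 'M[C]_m) : Prop :=
  adjmx A = A /\ forall v : 'cV[C]_m, 0 <= (adjmx v *m A *m v) ord0 ord0.

Definition is_state m (rho : 'M[C]_m) : Prop := psd rho /\ \tr rho = 1.

(* positivity of a k x k block matrix with m x m blocks X i j, i.e. of an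
   element of M_k(C) (x) M_m(C) *)
Definition block_psd k m (X : 'I_k -> 'I_k -> 'M[C]_m) : Prop :=
  (forall i j, adjmx (X i j) = X j i) /\
  forall v : 'I_k -> 'cV[C]_m,
    0 <= \sum_(i < k) \sum_(j < k) (adjmx (v i) *m X i j *m v j) ord0 ord0.

Definition completely_positive m (E : 'M[C]_m -> 'M[C]_m) : Prop :=
  forall (k : nat) (X : 'I_k -> 'I_k -> 'M[C]_m),
    block_psd X -> block_psd (fun i j => E (X i j)).

Definition is_channel m (E : 'M[C]_m -> 'M[C]_m) : Prop :=
  linear E /\ completely_positive E /\ forall X, \tr (E X) = \tr X.

(* Hamiltonian H = sum_x a_x |x><x| with non-degenerate Bohr spectrum *)
Definition nondeg_bohr m (a : 'I_m -> R) : Prop :=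
  forall x y x' y' : 'I_m,
    a x - a y = a x' - a y' <-> ((x = x' /\ y = y') \/ (x = y /\ x' = y')).

Definition partition_fun m (a : 'I_m -> R) (beta : R) : R :=
  \sum_(x < m) expR (- beta * a x).

Definition gibbs m (a : 'I_m -> R) (beta : R) : 'M[C]_m :=
  \matrix_(x, y) if x == y then (expR (- beta * a x) / partition_fun a beta)%:C
                 else 0.

(* e^{-i H t} for diagonal H : entries e^{-i a_x t} = cos(a_x t) - i sin(a_x t) *)
Definition evol m (a : 'I_m -> R) (t : R) : 'M[C]_m :=
  \matrix_(x, y) if x == y then cos (a x * t) -i* sin (a x * t) else 0.

Definition evol_inv m (a : 'I_m -> R) (t : R) : 'M[C]_m :=
  \matrix_(x, y) if x == y then cos (a x * t) +i* sin (a x * t) else 0.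

Definition GPC m (a : 'I_m -> R) (beta : R) (E : 'M[C]_m -> 'M[C]_m) : Prop :=
  is_channel E /\ E (gibbs a beta) = gibbs a beta /\
  forall (t : R) (rho : 'M[C]_m), is_state rho ->
    E (evol a t *m rho *m evol_inv a t) = evol a t *m E rho *m evol_inv a t.

Definition col_stochastic m (P : 'M[C]_m) : Prop :=
  (forall y x, 0 <= P y x) /\ (forall x, \sum_(y < m) P y x = 1).

Definition diagv m (A : 'M[C]_m) : 'cV[C]_m := \col_x A x x.

End QDefs.

(* Covariance under e^{-iHt}, extended from states to all matrices by polarization, multiplies
   the (z, w) entry of E(|x><y|) by e^{-i(a_z - a_w)t} and the matrix unit |x><y| itself by
   e^{-i(a_x - a_y)t}. By non-degeneracy of the Bohr spectrum, E(|x><y|) is therefore a multiple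
   of |x><y| when x <> y and is diagonal when x = y. So E acts on populations by the stochastic
   matrix p_{y|x} = <y|E(|x><x|)|y> and on coherences by Schur multiplication with
   c_{xy} = <x|E(|x><y|)|y> = s_{xy} / r_{xy}; the nonnegativity of P and the positivity of the
   matrix with diagonal p_{x|x} and off-diagonal c_{xy} are both compressions of the positive Choi
   matrix of E. Conversely, such a P defines the channel X |-> C o X + (transfer of the populations
   of X along the off-diagonal part of P), a Schur multiplier by a positive matrix plus a
   measure-and-prepare map, hence completely positive; it is visibly trace preserving, covariant
   and Gibbs preserving, and it maps rho to sigma. *)

From HB Require Import structures.
From mathcomp Require Import all_boot all_order all_algebra.
From mathcomp Require Import all_classical all_reals.
From mathcomp Require Import sequences exp trigo.
From mathcomp Require Import complex.
From mathcomp Require Import ring lra.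
Import Order.TTheory GRing.Theory Num.Theory.
Set Implicit Arguments. Unset Strict Implicit. Unset Printing Implicit Defensive.
Local Open Scope complex_scope.
Local Open Scope ring_scope.

Lemma conjC_polarization (C : numClosedFieldType) (a b c d : C) :
  2 * (a * d^*) = (a + b) * (c + d)^* + 'i * ((a + 'i * b) * (c + 'i * d)^*)
    - (1 + 'i) * (a * c^* + b * d^*).
Proof.
have ii : 'i * 'i = -1 :> C by rewrite -expr2 sqrCi.
by rewrite !(rmorphD, rmorphM) /= conjCi; ring: ii.
Qed.

Section Forms.
Variable R : realType.
Local Notation C := R[i].

Lemma adjmxE m n (A : 'M[C]_(m, n)) i j : adjmx A i j = (A j i)^*.
Proof. by rewrite !mxE. Qed.

Lemma adjmxK m n (A : 'M[C]_(m, n)) : adjmx (adjmx A) = A.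
Proof. by apply/matrixP => i j; rewrite !adjmxE conjCK. Qed.

Lemma adjmxD m n (A B : 'M[C]_(m, n)) : adjmx (A + B) = adjmx A + adjmx B.
Proof. by rewrite /adjmx map_mxD linearD. Qed.

Lemma adjmxM m n p (A : 'M[C]_(m, n)) (B : 'M[C]_(n, p)) :
  adjmx (A *m B) = adjmx B *m adjmx A.
Proof.
apply/matrixP => i j; rewrite adjmxE !mxE rmorph_sum; apply: eq_bigr => k _.
by rewrite !adjmxE rmorphM mulrC.
Qed.

Lemma formE m (A : 'M[C]_m) (u v : 'cV[C]_m) :
  (adjmx u *m A *m v) 0 0 = \sum_z \sum_w (u z 0)^* * A z w * v w 0.
Proof.
rewrite mxE; under eq_bigr => w _ do rewrite mxE big_distrl /=.
rewrite exchange_big; apply: eq_bigr => z _; apply: eq_bigr => w _.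
by rewrite !mxE.
Qed.

Lemma form_delta m (u v : 'cV[C]_m) x y :
  (adjmx u *m delta_mx x y *m v) 0 0 = (u x 0)^* * v y 0.
Proof.
rewrite formE (bigD1 x) //= (bigD1 y) //= !big1 ?addr0.
- by rewrite mxE !eqxx mulr1.
- move=> z /negbTE zx; rewrite big1 // => w _.
  by rewrite mxE zx mulr0 mul0r.
- by move=> w /negbTE wy; rewrite mxE wy andbF mulr0 mul0r.
Qed.

Lemma form_deltaZ m (A : 'M[C]_m) (c d : C) x y :
  (adjmx (c *: delta_mx x 0 : 'cV_m) *m A *m (d *: delta_mx y 0 : 'cV_m)) 0 0
  = c^* * A x y * d.
Proof.
rewrite formE (bigD1 x) //= (bigD1 y) //= !big1 ?addr0.
- by rewrite !mxE !eqxx !mulr1.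
- move=> z /negbTE zx; rewrite big1 // => w _.
  by rewrite !mxE zx mulr0n mulr0 conjC0 !mul0r.
- by move=> w /negbTE wy; rewrite !mxE wy mulr0n !mulr0.
Qed.

Lemma form_diag m (u v : 'cV[C]_m) (d : 'rV[C]_m) :
  (adjmx u *m diag_mx d *m v) 0 0 = \sum_z (u z 0)^* * d 0 z * v z 0.
Proof. by rewrite mxE; apply: eq_bigr => z _; rewrite mul_mx_diag !mxE. Qed.

Lemma conj_ge0 (c : C) : 0 <= c -> c^* = c.
Proof. by move/ger0_real/conj_Creal. Qed.

Lemma psd_diag_ge0 m (A : 'M[C]_m) x : psd A -> 0 <= A x x.
Proof.
by case=> _ /(_ (1 *: delta_mx x 0)); rewrite form_deltaZ conjC1 mulr1 mul1r.
Qed.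

Lemma psdZ m (A : 'M[C]_m) (c : C) : 0 <= c -> psd A -> psd (c *: A).
Proof.
move=> c_ge0 [hA A_ge0]; split.
  by apply/matrixP => z w; rewrite adjmxE !mxE rmorphM /= conj_ge0 // -adjmxE hA.
by move=> v; rewrite -scalemxAr -scalemxAl mxE mulr_ge0.
Qed.

Lemma psd_outer m (w : 'cV[C]_m) : psd (w *m adjmx w).
Proof.
split; first by rewrite adjmxM adjmxK.
move=> v; rewrite mulmxA -mulmxA [_ 0 0]mxE big_ord1.
have -> : (adjmx w *m v) 0 0 = ((adjmx v *m w) 0 0)^*.
  by rewrite -adjmxE adjmxM adjmxK.
exact: mul_conjC_ge0.
Qed.

Lemma mxtrace_outer_gt0 m (w : 'cV[C]_m) : w != 0 -> 0 < \tr (w *m adjmx w).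
Proof.
have trE : \tr (w *m adjmx w) = \sum_z w z 0 * (w z 0)^*.
  by apply: eq_bigr => z _; rewrite mxE big_ord1 adjmxE.
move=> w_neq0; rewrite lt_def trE sumr_ge0 ?andbT => [|z _]; last first.
  exact: mul_conjC_ge0.
apply: contra w_neq0 => /eqP/psumr_eq0P w0.
apply/eqP/matrixP => z j; rewrite (ord1 j) mxE.
by apply/eqP; rewrite -mul_conjC_eq0 w0 // => y _; apply: mul_conjC_ge0.
Qed.

Lemma outer_state m (w : 'cV[C]_m) : w != 0 ->
  is_state ((\tr (w *m adjmx w))^-1 *: (w *m adjmx w)).
Proof.
move=> /mxtrace_outer_gt0 tr_gt0; split; last by rewrite mxtraceZ mulVf ?gt_eqF.
by apply: psdZ; [rewrite invr_ge0 ltW | apply: psd_outer].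
Qed.

Lemma outer_delta m (x y : 'I_m) :
  (delta_mx x 0 : 'cV[C]_m) *m adjmx (delta_mx y 0 : 'cV[C]_m) = delta_mx x y.
Proof.
have -> : adjmx (delta_mx y 0) = delta_mx 0 y :> 'rV[C]_m.
  apply/matrixP => i j; rewrite adjmxE !mxE andbC.
  by case: (_ && _); rewrite ?conjC1 ?conjC0.
exact: mul_delta_mx.
Qed.

Lemma outer_polarization m (u v : 'cV[C]_m) :
  2 *: (u *m adjmx v) = (u + v) *m adjmx (u + v)
    + 'i *: ((u + 'i *: v) *m adjmx (u + 'i *: v))
    - (1 + 'i) *: (u *m adjmx u + v *m adjmx v).
Proof.
by apply/matrixP => p q; rewrite !mxE !big_ord1 !mxE; apply: conjC_polarization.
Qed.

End Forms.

Lemma exchange_big_pair (R : Type) (idx : R) (op : Monoid.com_law idx)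
    (I J : finType) (F : I -> I -> J -> J -> R) :
  \big[op/idx]_i \big[op/idx]_j \big[op/idx]_z \big[op/idx]_w F i j z w =
  \big[op/idx]_z \big[op/idx]_w \big[op/idx]_i \big[op/idx]_j F i j z w.
Proof.
under eq_bigr => i _ do rewrite exchange_big.
under eq_bigr => i _ do under eq_bigr => z _ do rewrite exchange_big.
by rewrite exchange_big; apply: eq_bigr => z _; rewrite exchange_big.
Qed.

Section CompletePositivity.
Variable R : realType.
Local Notation C := R[i].

Lemma psd_block_entries k m (X : 'I_k -> 'I_k -> 'M[C]_m) (f : 'I_k -> 'I_m) :
  block_psd X -> psd (\matrix_(i, j) X i j (f i) (f j)).
Proof.
case=> hX X_ge0; split.
  by apply/matrixP => i j; rewrite adjmxE !mxE -adjmxE hX.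
move=> c; have := X_ge0 (fun i => c i 0 *: delta_mx (f i) 0).
rewrite formE; congr (0 <= _); apply: eq_bigr => i _; apply: eq_bigr => j _.
by rewrite form_deltaZ mxE.
Qed.

Lemma block_psdD k m (X Y : 'I_k -> 'I_k -> 'M[C]_m) :
  block_psd X -> block_psd Y -> block_psd (fun i j => X i j + Y i j).
Proof.
move=> [hX X_ge0] [hY Y_ge0]; split=> [i j|v]; first by rewrite adjmxD hX hY.
under eq_bigr => i _ do under eq_bigr => j _ do rewrite mulmxDr mulmxDl mxE.
under eq_bigr => i _ do rewrite big_split /=.
by rewrite big_split addr_ge0.
Qed.

Lemma completely_positiveD m (E1 E2 : 'M[C]_m -> 'M[C]_m) :
  completely_positive E1 -> completely_positive E2 ->
  completely_positive (fun X => E1 X + E2 X).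
Proof. by move=> cp1 cp2 k X hX; apply: block_psdD; [apply: cp1 | apply: cp2]. Qed.

Lemma choi_block_psd m : block_psd (fun i j : 'I_m => delta_mx i j : 'M[C]_m).
Proof.
split=> [i j|v].
  by apply/matrixP => p q; rewrite adjmxE !mxE andbC rmorph_nat.
under eq_bigr => i _ do under eq_bigr => j _ do rewrite form_delta.
rewrite -big_distrlr /= -rmorph_sum mulrC.
exact: mul_conjC_ge0.
Qed.

(* With M = U^* diag(d) U and d >= 0, the sum is sum_k d_k <u_k, T u_k> over the rows u_k of U. *)
Lemma schur_sum_ge0 m (M T : 'M[C]_m) : psd M ->
    (forall w : 'cV[C]_m, 0 <= (adjmx w *m T *m w) 0 0) ->
  0 <= \sum_z \sum_w M z w * T z w.
Proof.
move=> hM T_ge0; set U := spectralmx M; set d := spectral_diag M.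
have U_unitary : U \is unitarymx := spectral_unitarymx M.
have adjE (A : 'M[C]_m) : map_mx Num.conj A^T = adjmx A by rewrite -map_trmx.
have M_normal : M \is normalmx by apply/normalmxP; rewrite adjE hM.1.
have eM : M = adjmx U *m diag_mx d *m U.
  by rewrite -adjE -invmx_unitary //; apply/orthomx_spectralP.
have UU : U *m adjmx U = 1%:M by rewrite -adjE; apply/unitarymxP.
have d_ge0 k : 0 <= d 0 k.
  have eD : U *m M *m adjmx U = diag_mx d.
    by rewrite eM !mulmxA UU mul1mx -mulmxA UU mulmx1.
  have -> : d 0 k = (adjmx (adjmx (row k U)) *m M *m adjmx (row k U)) 0 0.
    have -> : d 0 k = diag_mx d k k by rewrite mxE eqxx mulr1n.
    rewrite -eD adjmxK !mxE.
    apply: eq_bigr => w _; rewrite !mxE; congr (_ * _).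
    by apply: eq_bigr => z _; rewrite !mxE.
  exact: hM.2.
have ME z w : M z w = \sum_k (U k z)^* * d 0 k * U k w.
  by rewrite {1}eM mxE; apply: eq_bigr => k _; rewrite mul_mx_diag !mxE.
under eq_bigr => z _ do under eq_bigr => w _ do rewrite ME big_distrl /=.
under eq_bigr => z _ do rewrite exchange_big /=.
rewrite exchange_big /=; apply: sumr_ge0 => k _.
have := T_ge0 (\col_z U k z); rewrite formE => /(mulr_ge0 (d_ge0 k)).
rewrite mulr_sumr; congr (_ <= _); apply: eq_bigr => z _; rewrite mulr_sumr.
by apply: eq_bigr => w _; rewrite !mxE; ring.
Qed.

Definition schur_map m (M X : 'M[C]_m) : 'M[C]_m := \matrix_(z, w) (M z w * X z w).

Lemma adjmx_schur_map m (M X : 'M[C]_m) :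
  adjmx (schur_map M X) = schur_map (adjmx M) (adjmx X).
Proof. by apply/matrixP => z w; rewrite !mxE rmorphM. Qed.

Lemma schur_map_cp m (M : 'M[C]_m) : psd M -> completely_positive (schur_map M).
Proof.
move=> hM k X [hX X_ge0]; split=> [i j|v].
  by rewrite adjmx_schur_map hM.1 hX.
pose T := \matrix_(z, w) \sum_i \sum_j (v i z 0)^* * X i j z w * v j w 0.
have -> : \sum_i \sum_j (adjmx (v i) *m schur_map M (X i j) *m v j) 0 0
          = \sum_z \sum_w M z w * T z w.
  under eq_bigr => i _ do under eq_bigr => j _ do rewrite formE.
  rewrite exchange_big_pair; apply: eq_bigr => z _; apply: eq_bigr => w _.
  rewrite mxE mulr_sumr; apply: eq_bigr => i _; rewrite mulr_sumr.
  by apply: eq_bigr => j _; rewrite mxE; ring.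
apply: schur_sum_ge0 => // o.
have := X_ge0 (fun i => \col_z (o z 0 * v i z 0)); congr (0 <= _).
under eq_bigr => i _ do under eq_bigr => j _ do rewrite formE.
rewrite exchange_big_pair formE; apply: eq_bigr => z _; apply: eq_bigr => w _.
rewrite mxE mulr_sumr mulr_suml; apply: eq_bigr => i _.
rewrite mulr_sumr mulr_suml; apply: eq_bigr => j _.
by rewrite !mxE [(_ * _)^*](rmorphM Num.conj); ring.
Qed.

Definition transfer_map m (Q X : 'M[C]_m) : 'M[C]_m :=
  diag_mx (\row_z \sum_x Q z x * X x x).

Lemma transfer_map_cp m (Q : 'M[C]_m) :
  (forall z x, 0 <= Q z x) -> completely_positive (transfer_map Q).
Proof.
move=> Q_ge0 k X hXb; split=> [i j|v].
  apply/matrixP => z w; rewrite adjmxE !mxE eq_sym.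
  have [<-|_] := eqVneq z w; last by rewrite !mulr0n conjC0.
  rewrite !mulr1n (rmorph_sum Num.conj); apply: eq_bigr => x _.
  rewrite (rmorphM Num.conj); congr (_ * _); first exact: conj_ge0.
  by rewrite -(hXb.1 i j) adjmxE.
under eq_bigr => i _ do under eq_bigr => j _ do rewrite form_diag.
under eq_bigr => i _ do rewrite exchange_big.
rewrite exchange_big; apply: sumr_ge0 => z _ /=.
pose c : 'cV[C]_k := \col_i v i z 0.
have -> : \sum_i \sum_j (v i z 0)^* * (\row_z \sum_x Q z x * X i j x x) 0 z * v j z 0
    = \sum_x Q z x * (adjmx c *m \matrix_(i, j) X i j x x *m c) 0 0.
  under [RHS]eq_bigr => x _ do rewrite formE mulr_sumr.
  under [RHS]eq_bigr => x _ do under eq_bigr => i _ do rewrite mulr_sumr.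
  rewrite [RHS]exchange_big; apply: eq_bigr => i _ /=.
  rewrite [RHS]exchange_big; apply: eq_bigr => j _ /=.
  rewrite !mxE mulr_sumr mulr_suml.
  by apply: eq_bigr => x _; rewrite mxE; ring.
apply: sumr_ge0 => x _; apply: mulr_ge0 => //.
exact: (psd_block_entries (fun=> x) hXb).2.
Qed.

End CompletePositivity.

Section Phases.
Variable R : realType.
Local Notation C := R[i].
Local Notation phase r := (cos r -i* sin r : C).
Local Notation cophase r := (cos r +i* sin r : C).

Lemma phase_mul_cophase (p q : R) : phase p * cophase q = phase (p - q).
Proof.
apply/eqP; rewrite eq_complex /= cosB sinB.
by apply/andP; split; apply/eqP; ring.
Qed.

Lemma phase_mul_cophaseK (p : R) : phase p * cophase p = 1.
Proof.
apply/eqP; rewrite eq_complex /=; apply/andP; split; apply/eqP; last by ring.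
by rewrite mulNr opprK -!expr2 cos2Dsin2.
Qed.

Lemma phase_freq_inj (d1 d2 : R) :
  (forall t, phase (d1 * t) = phase (d2 * t)) -> d1 = d2.
Proof.
move=> h; apply/eqP/negPn/negP; rewrite -subr_eq0 => d12_neq0.
pose t := pi / (d1 - d2).
have e : d1 * t = d2 * t + pi by rewrite /t; field.
case: (h t); rewrite e cosDpi sinDpi => hc hs.
have c0 : cos (d2 * t) = 0 by lra.
have s0 : sin (d2 * t) = 0 by lra.
have := cos2Dsin2 (d2 * t); rewrite c0 s0 !expr2 !mul0r addr0 => /eqP.
by rewrite eq_sym oner_eq0.
Qed.

Lemma evol_conjE m (a : 'I_m -> R) t (X : 'M[C]_m) z w :
  (evol a t *m X *m evol_inv a t) z w = phase (a z * t) * X z w * cophase (a w * t).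
Proof.
rewrite mxE (bigD1 w) //= big1 ?addr0 => [|y /negbTE yw]; last first.
  by rewrite [evol_inv _ _ _ _]mxE yw mulr0.
rewrite [evol_inv _ _ _ _]mxE eqxx mxE (bigD1 z) //= big1 ?addr0 => [|y /negbTE yz].
  by rewrite [evol _ _ _ _]mxE eqxx.
by rewrite [evol _ _ _ _]mxE eq_sym yz mul0r.
Qed.

Lemma evol_conj_delta m (a : 'I_m -> R) t x y :
  evol a t *m delta_mx x y *m evol_inv a t = phase ((a x - a y) * t) *: delta_mx x y.
Proof.
apply/matrixP => p q; rewrite evol_conjE !mxE mulrBl -phase_mul_cophase.
case: (eqVneq p x) => [->|px]; case: (eqVneq q y) => [->|qy];
  by rewrite ?eqxx ?(negbTE px) ?(negbTE qy) /= ?andbF; ring.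
Qed.

End Phases.

Section GpcMap.
Variable R : realType.
Local Notation C := R[i].
Variables (m : nat) (P M : 'M[C]_m).

(* The diagonal of P is carried by M (hypothesis [M_diag] below), hence the zero diagonal of
   the transfer part. *)
Definition gpc_map (X : 'M[C]_m) : 'M[C]_m :=
  schur_map M X + transfer_map (\matrix_(z, x) (P z x *+ (z != x))) X.

Hypothesis M_diag : forall z, M z z = P z z.

Lemma gpc_mapE X z w :
  gpc_map X z w = if z == w then \sum_x P z x * X x x else M z w * X z w.
Proof.
rewrite !mxE; have [<-|_] := eqVneq z w; last by rewrite mulr0n addr0.
rewrite mulr1n M_diag [RHS](bigD1 z) //=; congr (_ + _).
rewrite (bigD1 z) //= mxE eqxx mulr0n mul0r add0r.
by apply: eq_bigr => x xz; rewrite mxE eq_sym xz mulr1n.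
Qed.

Lemma gpc_map_linear : linear gpc_map.
Proof.
move=> c X Y; apply/matrixP => z w; rewrite [in RHS]mxE [in RHS]mxE !gpc_mapE.
case: eqP => _; last by rewrite !mxE mulrDr mulrCA.
rewrite mulr_sumr -big_split; apply: eq_bigr => x _.
by rewrite !mxE mulrDr mulrCA.
Qed.

Lemma gpc_map_trace : (forall x, \sum_y P y x = 1) ->
  forall X, \tr (gpc_map X) = \tr X.
Proof.
move=> P_col X; rewrite /mxtrace; under eq_bigr => z _ do rewrite gpc_mapE eqxx.
by rewrite exchange_big; apply: eq_bigr => x _; rewrite -mulr_suml P_col mul1r.
Qed.

Lemma gpc_map_cp : (forall z x, 0 <= P z x) -> psd M -> completely_positive gpc_map.
Proof.
move=> P_ge0 M_psd; apply: completely_positiveD; first exact: schur_map_cp.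
by apply: transfer_map_cp => z x; rewrite mxE mulrn_wge0.
Qed.

Lemma gpc_map_covariant (a : 'I_m -> R) t X :
  gpc_map (evol a t *m X *m evol_inv a t) = evol a t *m gpc_map X *m evol_inv a t.
Proof.
apply/matrixP => z w; rewrite evol_conjE !gpc_mapE.
case: eqP => [<-|_]; last by rewrite evol_conjE; ring.
rewrite mulrC mulrA [_ * (cos _ -i* _)]mulrC phase_mul_cophaseK mul1r.
by apply: eq_bigr => x _; rewrite evol_conjE [_ * X x x]mulrC -mulrA phase_mul_cophaseK; ring.
Qed.

Lemma gpc_map_eq X Y : P *m diagv X = diagv Y ->
  (forall z w, z != w -> M z w * X z w = Y z w) -> gpc_map X = Y.
Proof.
move=> PXY offXY; apply/matrixP => z w; rewrite gpc_mapE.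
have [<-|] := eqVneq z w; last exact: offXY.
have /matrixP/(_ z 0) := PXY; rewrite !mxE => <-.
by apply: eq_bigr => x _; rewrite mxE.
Qed.

End GpcMap.

Section Covariance.
Variable R : realType.
Local Notation C := R[i].
Local Notation phase r := (cos r -i* sin r : C).
Variables (m : nat) (a : 'I_m -> R) (E : 'M[C]_m -> 'M[C]_m).
Hypothesis E_linear : linear E.
Hypothesis E_covariant : forall (t : R) (rho : 'M[C]_m), is_state rho ->
  E (evol a t *m rho *m evol_inv a t) = evol a t *m E rho *m evol_inv a t.

Let E_lin : {linear 'M[C]_m -> 'M[C]_m} :=
  HB.pack E (GRing.isLinear.Build _ _ _ _ E E_linear).
Let E0 : E 0 = 0. Proof. exact: (linear0 E_lin). Qed.
Let ED X Y : E (X + Y) = E X + E Y. Proof. exact: (linearD E_lin). Qed.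
Let EZ c X : E (c *: X) = c *: E X. Proof. exact: (linearZZ E_lin). Qed.

Lemma linear_delta_expand X : E X = \sum_x \sum_y X x y *: E (delta_mx x y).
Proof.
rewrite -[E X]/(E_lin X) {1}(matrix_sum_delta X) linear_sum.
by apply: eq_bigr => x _; rewrite linear_sum; apply: eq_bigr => y _; rewrite linearZ.
Qed.

Definition covariant_at t X :=
  E (evol a t *m X *m evol_inv a t) = evol a t *m E X *m evol_inv a t.

Lemma covariant_atD t X Y :
  covariant_at t X -> covariant_at t Y -> covariant_at t (X + Y).
Proof.
rewrite /covariant_at mulmxDr mulmxDl !ED => -> ->.
by rewrite mulmxDr mulmxDl.
Qed.

Lemma covariant_atZ t c X : covariant_at t X -> covariant_at t (c *: X).
Proof.
rewrite /covariant_at -scalemxAr -scalemxAl !EZ => ->.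
by rewrite -scalemxAr -scalemxAl.
Qed.

Lemma covariant_at_outer t (w : 'cV[C]_m) : covariant_at t (w *m adjmx w).
Proof.
have [->|w_neq0] := eqVneq w 0.
  by rewrite /covariant_at !(mul0mx, mulmx0) E0 mulmx0 mul0mx.
have tr_gt0 := mxtrace_outer_gt0 w_neq0.
rewrite -[w *m _](scale1r) -(mulfV (lt0r_neq0 tr_gt0)) -scalerA.
exact/covariant_atZ/E_covariant/outer_state.
Qed.

(* Covariance is only assumed on states; polarization writes 2 |x><y| through pure states. *)
Lemma covariant_at_delta t x y : covariant_at t (delta_mx x y).
Proof.
have -> : delta_mx x y = 2^-1 *: (2 *: delta_mx x y) :> 'M[C]_m.
  by rewrite scalerA mulVf ?scale1r ?pnatr_eq0.
apply: covariant_atZ; rewrite -outer_delta outer_polarization -scaleNr.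
apply: covariant_atD; first apply: covariant_atD.
- exact: covariant_at_outer.
- exact/covariant_atZ/covariant_at_outer.
- by apply/covariant_atZ/covariant_atD; apply: covariant_at_outer.
Qed.

Hypothesis a_bohr : nondeg_bohr a.

Lemma delta_image_support x y z w : E (delta_mx x y) z w != 0 ->
  (x = z /\ y = w) \/ (x = y /\ z = w).
Proof.
move=> Exy_neq0; apply/(a_bohr x y z w); apply: phase_freq_inj => t.
have := covariant_at_delta t x y; rewrite /covariant_at evol_conj_delta EZ.
move=> /matrixP/(_ z w); rewrite evol_conjE mxE => eE.
apply: (mulIf Exy_neq0); rewrite eE mulrBl -phase_mul_cophase; ring.
Qed.

Lemma delta_image_diag X y : E X y y = \sum_x X x x * E (delta_mx x x) y y.
Proof.
rewrite linear_delta_expand summxE; apply: eq_bigr => x _.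
rewrite summxE (bigD1 x) //= big1 ?addr0 => [|y' y'x]; first by rewrite mxE.
rewrite mxE; have [->|Exy'_neq0] := eqVneq (E (delta_mx x y') y y) 0.
  by rewrite mulr0.
case: (delta_image_support Exy'_neq0) => [[xy y'y]|[xy' _]]; move: y'x.
  by rewrite xy y'y eqxx.
by rewrite xy' eqxx.
Qed.

Lemma delta_image_offdiag X x y : x != y -> E X x y = X x y * E (delta_mx x y) x y.
Proof.
move=> xy; rewrite linear_delta_expand summxE (bigD1 x) //=.
rewrite [X in _ + X]big1 => [|x' x'x].
  rewrite addr0 summxE (bigD1 y) //= [X in _ + X]big1 ?addr0 => [|y' y'y].
    by rewrite mxE.
  rewrite mxE; have [->|Exy'_neq0] := eqVneq (E (delta_mx x y') x y) 0.
    by rewrite mulr0.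
  case: (delta_image_support Exy'_neq0) => [[_ y'y']|[_ xy']]; move: y'y xy.
    by rewrite y'y' eqxx.
  by rewrite xy' eqxx.
rewrite summxE big1 // => y' _; rewrite mxE.
have [->|Ex'y'_neq0] := eqVneq (E (delta_mx x' y') x y) 0; first by rewrite mulr0.
case: (delta_image_support Ex'y'_neq0) => [[x'x' _]|[_ xy']]; move: x'x xy.
  by rewrite x'x' eqxx.
by rewrite xy' eqxx.
Qed.

End Covariance.

Section Characterization.
Variable R : realType.
Local Notation C := R[i].
Variables (m : nat) (a : 'I_m -> R) (beta : R) (rho sigma : 'M[C]_m).
Hypothesis rho_offdiag : forall x y : 'I_m, x != y -> rho x y != 0.

Local Notation coherence_mx P :=
  (\matrix_(x, y) if x == y then P x x else sigma x y / rho x y).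

Lemma gpc_of_stochastic P : col_stochastic P ->
  P *m diagv rho = diagv sigma ->
  P *m diagv (gibbs a beta) = diagv (gibbs a beta) ->
  psd (coherence_mx P) ->
  exists E, GPC a beta E /\ E rho = sigma.
Proof.
move=> [P_ge0 P_col] P_rho P_gibbs M_psd.
have M_diag z : coherence_mx P z z = P z z by rewrite mxE eqxx.
exists (gpc_map P (coherence_mx P)); split; last first.
  apply: gpc_map_eq => // z w zw.
  by rewrite mxE (negbTE zw) mulfVK ?rho_offdiag.
split; first split; [exact: gpc_map_linear | split |].
- exact: gpc_map_cp.
- exact: gpc_map_trace.
split; last by move=> t X _; apply: gpc_map_covariant.
apply: gpc_map_eq => // z w /negbTE zw.
by rewrite [gibbs _ _ z w]mxE zw mulr0.
Qed.

Hypothesis a_bohr : nondeg_bohr a.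

Lemma stochastic_of_gpc E : GPC a beta E -> E rho = sigma ->
  exists P : 'M[C]_m,
    [/\ col_stochastic P, P *m diagv rho = diagv sigma,
        P *m diagv (gibbs a beta) = diagv (gibbs a beta) & psd (coherence_mx P)].
Proof.
move=> [[E_linear [E_cp E_trace]] [E_gibbs E_cov]] E_rho.
have choi := E_cp m _ (choi_block_psd R m).
pose P := \matrix_(y, x) E (delta_mx x x) y y.
have P_diagv X : P *m diagv X = diagv (E X).
  apply/matrixP => y j; rewrite (ord1 j) !mxE (delta_image_diag E_linear E_cov a_bohr).
  by apply: eq_bigr => x _; rewrite !mxE mulrC.
exists P; split; [split | by rewrite P_diagv E_rho | by rewrite P_diagv E_gibbs |].
- move=> y x; have := psd_diag_ge0 x (psd_block_entries (fun=> y) choi).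
  by rewrite !mxE.
- move=> x; under eq_bigr => y _ do rewrite mxE.
  rewrite [LHS]E_trace /mxtrace (bigD1 x) //= big1 ?addr0 => [|z zx].
    by rewrite mxE !eqxx.
  by rewrite mxE (negbTE zx).
have -> : coherence_mx P = \matrix_(x, y) E (delta_mx x y) x y.
  apply/matrixP => x y; rewrite !mxE; have [->//|xy] := eqVneq x y.
  by rewrite -E_rho (delta_image_offdiag E_linear E_cov a_bohr) // mulrC mulKf ?rho_offdiag.
exact: psd_block_entries id choi.
Qed.

End Characterization.

Theorem lemma5 (R : realType) (m : nat) (a : 'I_m -> R) (beta : R)
  (hbeta : 0 < beta) (hbohr : nondeg_bohr a)
  (rho sigma : 'M[R[i]]_m) (hrho : is_state rho) (hsigma : is_state sigma)
  (hoff : forall x y : 'I_m, x != y -> rho x y != 0) :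
  (exists E : 'M[R[i]]_m -> 'M[R[i]]_m, GPC a beta E /\ E rho = sigma) <->
  (exists P : 'M[R[i]]_m,
     [/\ col_stochastic P,
         P *m diagv rho = diagv sigma,
         P *m diagv (gibbs a beta) = diagv (gibbs a beta) &
         psd (\matrix_(x, y) if x == y then P x x else sigma x y / rho x y)]).
Proof.
split=> [[E [E_gpc E_rho]]|[P [P_stoch P_rho P_gibbs M_psd]]].
  by have := stochastic_of_gpc hoff hbohr E_gpc E_rho.
by have := gpc_of_stochastic hoff P_stoch P_rho P_gibbs M_psd.
Qed.
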